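(* A graph $G$ admits a full $C_5$-colouring if and only if $G$ has no induced subgraph isomorphic to $C_3$, to $K_1+P_4$, or to $2K_2$.
   Context: All graphs are finite, simple and loopless. $P_n$ and $C_n$ denote the path and cycle on $n$ vertices; $+$ denotes disjoint union and $2K_2$ is the disjoint union of two edges. A full $C_5$-colouring of $G$ is a map $\varphi\colon V(G)\to V(C_5)$ such that for all $x,y\in V(G)$, $xy\in E(G)$ if and only if $\varphi(x)\varphi(y)\in E(C_5)$. *)

From mathcomp Require Import all_boot.
Set Implicit Arguments.
Unset Strict Implicit.
Unset Printing Implicit Defensive.

(* A finite simple loopless graph is a finType T of vertices together with a
   symmetric irreflexive boolean adjacency relation e : rel T. *)

Definition C5_adj : rel 'I_5 :=
  fun i j => let a := nat_of_ord i in let b := nat_of_ord j in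
    (a.+1 %% 5 == b) || (b.+1 %% 5 == a).

Definition full_C5_colouring (T : finType) (e : rel T) (phi : T -> 'I_5) : Prop :=
  forall x y : T, e x y = C5_adj (phi x) (phi y).

Definition has_full_C5_colouring (T : finType) (e : rel T) : Prop :=
  exists phi : T -> 'I_5, full_C5_colouring e phi.

Definition has_induced_copy (U T : finType) (h : rel U) (e : rel T) : Prop :=
  exists f : U -> T, injective f /\ forall a b : U, e (f a) (f b) = h a b.

Definition C3_adj : rel 'I_3 := fun i j => i != j.

Definition K1P4_adj : rel 'I_5 :=
  fun i j => let a := nat_of_ord i in let b := nat_of_ord j in
    [&& a < 4, b < 4 & (a.+1 == b) || (b.+1 == a)].

Definition twoK2_adj : rel 'I_4 :=
  fun i j => let a := nat_of_ord i in let b := nat_of_ord j in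
    [|| (a == 0) && (b == 1), (a == 1) && (b == 0),
        (a == 2) && (b == 3) | (a == 3) && (b == 2)].

From mathcomp Require Import all_boot.
Set Implicit Arguments.
Unset Strict Implicit.
Unset Printing Implicit Defensive.

(* C_5 contains no induced triangle, 2K_2 or K_1 + P_4, and these configurations
   pull back along a full colouring.  Conversely, fix an edge uv of a graph without
   them and colour the twins of u by 0, the twins of v by 1, the other neighbours
   of v by 2, the other neighbours of u by 4 and the vertices seeing neither u nor
   v by 3.  Triangle-freeness, and 2K_2-freeness for two vertices of class 3, give
   the adjacencies C_5 requires except between classes 2, 3 and 4.  There a vertex
   distinguishing a non-twin from u (or v) hangs off the induced P_3 or C_4 through
   uv, and together with the remaining vertex it spans an induced 2K_2 or
   K_1 + P_4. *)

Section ForbiddenConfigurations.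

Variables (T : Type) (e : rel T).

(* The vertices are not required to be distinct, so that these properties pull
   back along non-injective maps such as colourings; in a loopless graph the
   adjacency pattern forces distinctness anyway. *)
Definition C3_free := forall a b c, e a b -> e b c -> e a c -> False.

Definition twoK2_free :=
  forall a b c d, e a b -> e c d ->
    ~~ e a c -> ~~ e a d -> ~~ e b c -> ~~ e b d -> False.

Definition K1P4_free :=
  forall a b c d w, e a b -> e b c -> e c d ->
    ~~ e a c -> ~~ e b d -> ~~ e a d ->
    ~~ e w a -> ~~ e w b -> ~~ e w c -> ~~ e w d -> False.

End ForbiddenConfigurations.

Section Pullback.

Variables (T U : Type) (e : rel T) (h : rel U) (f : T -> U).
Hypothesis ef : forall x y, e x y = h (f x) (f y).

Lemma C3_free_pullback : C3_free h -> C3_free e.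
Proof. by move=> free a b c; rewrite !ef; apply: free. Qed.

Lemma twoK2_free_pullback : twoK2_free h -> twoK2_free e.
Proof. by move=> free a b c d; rewrite !ef; apply: free. Qed.

Lemma K1P4_free_pullback : K1P4_free h -> K1P4_free e.
Proof. by move=> free a b c d w; rewrite !ef; apply: free. Qed.

End Pullback.

Lemma C5_adj_sym : symmetric C5_adj.
Proof. by move=> i j; rewrite /C5_adj orbC. Qed.

Lemma C5_C3_free : C3_free C5_adj.
Proof. by do 3 case=> [[|[|[|[|[|?]]]]] ?]. Qed.

Lemma C5_twoK2_free : twoK2_free C5_adj.
Proof. by do 4 case=> [[|[|[|[|[|?]]]]] ?]. Qed.

Lemma C5_K1P4_free : K1P4_free C5_adj.
Proof.
(* Each [//] discards the branches whose next premise has evaluated to false. *)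
move=> [[|[|[|[|[|?]]]]] ?] [[|[|[|[|[|?]]]]] ?] [[|[|[|[|[|?]]]]] ?] d w // ? ?;
  case: d => [[|[|[|[|[|?]]]]] ?] // ? ? ? ?; case: w => [[|[|[|[|[|?]]]]] ?] //.
Qed.

Definition point_determining (U : finType) (h : rel U) :=
  forall a b, h a =1 h b -> a = b.

Lemma induced_copy_of_point_determining (U T : finType) (h : rel U) (e : rel T)
    (f : U -> T) :
  point_determining h -> (forall a b, e (f a) (f b) = h a b) ->
  has_induced_copy h e.
Proof.
move=> h_pd ef; exists f; split=> // a b fab.
by apply: h_pd => c; rewrite -!ef fab.
Qed.

Lemma C3_point_determining : point_determining C3_adj.
Proof.
move=> a b /eq_map/(_ (enum 'I_3)); rewrite !enum_ordSl enum_ord0 /=.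
by move: a b => [[|[|[|?]]] ?] [[|[|[|?]]] ?] // _; apply: val_inj.
Qed.

Lemma twoK2_point_determining : point_determining twoK2_adj.
Proof.
move=> a b /eq_map/(_ (enum 'I_4)); rewrite !enum_ordSl enum_ord0 /=.
by move: a b => [[|[|[|[|?]]]] ?] [[|[|[|[|?]]]] ?] // _; apply: val_inj.
Qed.

Lemma K1P4_point_determining : point_determining K1P4_adj.
Proof.
move=> a b /eq_map/(_ (enum 'I_5)); rewrite !enum_ordSl enum_ord0 /=.
by move: a b => [[|[|[|[|[|?]]]]] ?] [[|[|[|[|[|?]]]]] ?] // _; apply: val_inj.
Qed.

Section EdgeColouring.

Variables (T : finType) (e : rel T).
Hypotheses (e_sym : symmetric e) (e_irr : irreflexive e).
Hypotheses (e_C3_free : C3_free e) (e_twoK2_free : twoK2_free e)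
  (e_K1P4_free : K1P4_free e).

Definition twin (x y : T) := [forall w, e x w == e y w].

Lemma twinE x y w : twin x y -> e x w = e y w.
Proof. by move/forallP/(_ w)/eqP. Qed.

Lemma not_twinP x y :
  ~~ twin x y -> exists z, (e z x && ~~ e z y) || (e z y && ~~ e z x).
Proof.
case/forallPn=> z; rewrite (e_sym x) (e_sym y) => xz_yz.
by exists z; move: xz_yz; case: (e z x); case: (e z y).
Qed.

Lemma neighbours_nonadj a x y : e a x -> e a y -> ~~ e x y.
Proof. by move=> ax ay; apply/negP => xy; apply: (e_C3_free ax xy ay). Qed.

Lemma no_P3_pendant_isolated a b c z y :
  e a b -> e b c -> e z a -> ~~ e z c -> ~~ e y a -> ~~ e y b -> ~~ e y c -> False.
Proof.
move=> ab bc za zc ya yb yc.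
have ac : ~~ e a c by apply: (neighbours_nonadj (a := b)); rewrite // e_sym.
have zb : ~~ e z b by apply: (neighbours_nonadj (a := a)); rewrite // e_sym.
case: (boolP (e z y)) => zy.
  by apply: (e_twoK2_free zy bc); rewrite // e_sym.
by apply: (e_K1P4_free (w := y) za ab bc); rewrite // e_sym.
Qed.

Lemma no_C4_two_pendants a b c d z w :
  e a b -> e b c -> e c d -> e d a ->
  e z a -> ~~ e z c -> e w b -> ~~ e w d -> False.
Proof.
move=> ab bc cd da za zc wb wd.
have ac : ~~ e a c by apply: (neighbours_nonadj (a := b)); rewrite // e_sym.
have zd : ~~ e z d by apply: (neighbours_nonadj (a := a)); rewrite // e_sym.
have wa : ~~ e w a by apply: (neighbours_nonadj (a := b)); rewrite // e_sym.
have wc : ~~ e w c by apply: (neighbours_nonadj (a := b)); rewrite // e_sym.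
case: (boolP (e z w)) => zw.
  by apply: (e_twoK2_free zw cd).
by apply: (e_K1P4_free (w := w) za (_ : e a d) (_ : e d c)); rewrite // e_sym.
Qed.

Lemma not_twin_adj_far u v x y :
  e u v -> e v x -> ~~ twin x u -> ~~ e u y -> ~~ e v y -> e x y.
Proof.
move=> uv vx /not_twinP [z z_xu] uy vy; apply/negPn/negP => xy.
case/orP: z_xu => /andP [z_adj z_nadj].
  by apply: (no_P3_pendant_isolated (y := y) (_ : e x v) (_ : e v u) z_adj z_nadj);
    rewrite // e_sym.
by apply: (no_P3_pendant_isolated (y := y) uv vx z_adj z_nadj); rewrite // e_sym.
Qed.

Lemma not_twins_nonadj u v x y :
  e u v -> e v x -> ~~ twin x u -> e u y -> ~~ twin y v -> ~~ e x y.
Proof.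
move=> uv vx /not_twinP [z z_xu] uy /not_twinP [w w_yv]; apply/negP => xy.
case/orP: z_xu => /andP [z_adj z_nadj]; case/orP: w_yv => /andP [w_adj w_nadj].
- by apply: (no_C4_two_pendants (_ : e x y) (_ : e y u) uv vx z_adj z_nadj
      w_adj w_nadj); rewrite // e_sym.
- by apply: (no_C4_two_pendants (_ : e x v) (_ : e v u) uy (_ : e y x) z_adj z_nadj
      w_adj w_nadj); rewrite // e_sym.
- by apply: (no_C4_two_pendants uy (_ : e y x) (_ : e x v) (_ : e v u) z_adj z_nadj
      w_adj w_nadj); rewrite // e_sym.
- by apply: (no_C4_two_pendants uv vx xy (_ : e y u) z_adj z_nadj w_adj w_nadj);
    rewrite e_sym.
Qed.

Lemma far_nonadj u v x y :
  e u v -> ~~ e u x -> ~~ e v x -> ~~ e u y -> ~~ e v y -> ~~ e x y.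
Proof.
move=> uv ux vx uy vy; apply/negP => xy.
by apply: (e_twoK2_free xy uv); rewrite // e_sym.
Qed.

Variables (u v : T).
Hypothesis uv : e u v.

Definition edge_colouring (x : T) : 'I_5 :=
  if twin x u then @Ordinal 5 0 isT
  else if twin x v then @Ordinal 5 1 isT
  else if e u x then @Ordinal 5 4 isT
  else if e v x then @Ordinal 5 2 isT
  else @Ordinal 5 3 isT.

Variant edge_colouring_spec (x : T) : 'I_5 -> Prop :=
  | ColourTwinU of twin x u : edge_colouring_spec x (@Ordinal 5 0 isT)
  | ColourTwinV of twin x v : edge_colouring_spec x (@Ordinal 5 1 isT)
  | ColourNbrV of e v x & ~~ twin x u : edge_colouring_spec x (@Ordinal 5 2 isT)
  | ColourFar of ~~ e u x & ~~ e v x : edge_colouring_spec x (@Ordinal 5 3 isT)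
  | ColourNbrU of e u x & ~~ twin x v : edge_colouring_spec x (@Ordinal 5 4 isT).

Lemma edge_colouringP x : edge_colouring_spec x (edge_colouring x).
Proof.
rewrite /edge_colouring.
case: (boolP (twin x u)) => [|xu]; first exact: ColourTwinU.
case: (boolP (twin x v)) => [|xv]; first exact: ColourTwinV.
case: (boolP (e u x)) => [ux|ux]; first exact: ColourNbrU.
by case: (boolP (e v x)) => vx; [apply: ColourNbrV | apply: ColourFar].
Qed.

Lemma adj_u_colour y : e u y = C5_adj (@Ordinal 5 0 isT) (edge_colouring y).
Proof.
case: (edge_colouringP y) => [yu | yv | vy _ | /negbTE -> _ | -> _] //.
- by rewrite e_sym (twinE _ yu) e_irr.
- by rewrite e_sym (twinE _ yv) e_sym uv.
- by apply/negbTE; apply: (neighbours_nonadj (a := v)); rewrite // e_sym.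
Qed.

Lemma adj_v_colour y : e v y = C5_adj (@Ordinal 5 1 isT) (edge_colouring y).
Proof.
case: (edge_colouringP y) => [yu | yv | -> _ | _ /negbTE -> | uy _] //.
- by rewrite e_sym (twinE _ yu) uv.
- by rewrite e_sym (twinE _ yv) e_irr.
- by apply/negbTE; apply: (neighbours_nonadj (a := u)).
Qed.

Lemma edge_colouring_full : full_C5_colouring e edge_colouring.
Proof.
move=> x y; wlog le_xy : x y / edge_colouring x <= edge_colouring y.
  move=> wlog_le; case: (leqP (edge_colouring x) (edge_colouring y)) => [|/ltnW].
    exact: wlog_le.
  by rewrite e_sym C5_adj_sym; apply: wlog_le.
case: (edge_colouringP x) le_xy => [xu | xv | vx ntxu | ux vx | ux ntxv] le_xy.
- by rewrite (twinE _ xu) adj_u_colour.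
- by rewrite (twinE _ xv) adj_v_colour.
- case: (edge_colouringP y) le_xy => // [vy _ | uy vy | uy ntyv] _.
  + exact/negbTE/(neighbours_nonadj vx vy).
  + exact: (not_twin_adj_far uv vx ntxu uy vy).
  + exact/negbTE/(not_twins_nonadj uv vx ntxu uy ntyv).
- case: (edge_colouringP y) le_xy => // [uy vy | uy ntyv] _.
  + exact/negbTE/(far_nonadj uv ux vx uy vy).
  + by rewrite e_sym; apply: (not_twin_adj_far (_ : e v u) uy ntyv); rewrite // e_sym.
- case: (edge_colouringP y) le_xy => // [uy _] _.
  exact/negbTE/(neighbours_nonadj ux uy).
Qed.

End EdgeColouring.

Section InducedCopies.

Variables (T : finType) (e : rel T).
Hypotheses (e_sym : symmetric e) (e_irr : irreflexive e).

Lemma C3_freeP : C3_free e <-> ~ has_induced_copy C3_adj e.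
Proof.
split=> [free [f [_ ef]] | no_copy a b c ab bc ac].
  by apply: (free (f (@Ordinal 3 0 isT)) (f (@Ordinal 3 1 isT))
                  (f (@Ordinal 3 2 isT))); rewrite ef.
apply/no_copy/(induced_copy_of_point_determining
                 (f := fun i : 'I_3 => nth a [:: a; b; c] i)).
  exact: C3_point_determining.
by move=> [[|[|[|?]]] ?] [[|[|[|?]]] ?] //=; rewrite ?e_irr // e_sym.
Qed.

Lemma twoK2_freeP : twoK2_free e <-> ~ has_induced_copy twoK2_adj e.
Proof.
split=> [free [f [_ ef]] |
         no_copy a b c d ab cd /negbTE ac /negbTE ad /negbTE bc /negbTE bd].
  by apply: (free (f (@Ordinal 4 0 isT)) (f (@Ordinal 4 1 isT))
                  (f (@Ordinal 4 2 isT)) (f (@Ordinal 4 3 isT))); rewrite ef.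
apply/no_copy/(induced_copy_of_point_determining
                 (f := fun i : 'I_4 => nth a [:: a; b; c; d] i)).
  exact: twoK2_point_determining.
by move=> [[|[|[|[|?]]]] ?] [[|[|[|[|?]]]] ?] //=; rewrite ?e_irr // e_sym.
Qed.

Lemma K1P4_freeP : K1P4_free e <-> ~ has_induced_copy K1P4_adj e.
Proof.
split=> [free [f [_ ef]] |
         no_copy a b c d w ab bc cd /negbTE ac /negbTE bd /negbTE ad
                 /negbTE wa /negbTE wb /negbTE wc /negbTE wd].
  by apply: (free (f (@Ordinal 5 0 isT)) (f (@Ordinal 5 1 isT)) (f (@Ordinal 5 2 isT))
                  (f (@Ordinal 5 3 isT)) (f (@Ordinal 5 4 isT))); rewrite ef.
apply/no_copy/(induced_copy_of_point_determining
                 (f := fun i : 'I_5 => nth a [:: a; b; c; d; w] i)).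
  exact: K1P4_point_determining.
by move=> [[|[|[|[|[|?]]]]] ?] [[|[|[|[|[|?]]]]] ?] //=; rewrite ?e_irr // e_sym.
Qed.

End InducedCopies.

Theorem corollary3p11 (T : finType) (e : rel T)
  (e_sym : symmetric e) (e_irr : irreflexive e) :
  has_full_C5_colouring e <->
  (~ has_induced_copy C3_adj e /\ ~ has_induced_copy K1P4_adj e /\
   ~ has_induced_copy twoK2_adj e).
Proof.
split=> [[phi phi_full] | [/(C3_freeP e_sym e_irr) e_C3_free
                         [/(K1P4_freeP e_sym e_irr) e_K1P4_free
                          /(twoK2_freeP e_sym e_irr) e_twoK2_free]]].
  split; [|split].
  - exact/(C3_freeP e_sym e_irr)/(C3_free_pullback phi_full C5_C3_free).
  - exact/(K1P4_freeP e_sym e_irr)/(K1P4_free_pullback phi_full C5_K1P4_free).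
  - exact/(twoK2_freeP e_sym e_irr)/(twoK2_free_pullback phi_full C5_twoK2_free).
case: (pickP (fun p : T * T => e p.1 p.2)) => [[u v] /= uv | edgeless].
  by exists (edge_colouring e u v); apply: edge_colouring_full.
by exists (fun=> ord0) => x y; rewrite (edgeless (x, y)).
Qed.
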